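(* Let $S$ be a closed densely defined symmetric operator in a separable Hilbert space $\mathfrak H$ with equal nonzero defect numbers. Then $S$ is a Phillips symmetric operator if and only if $$\mathfrak N_\lambda\subset \mathcal D(S)\dotplus \mathfrak N_\mu\quad\text{for all }\lambda,\mu\in\mathbb C_+ .$$
   Context: $\mathbb C_\pm$ denote the open upper/lower half planes. For a closed densely defined symmetric operator $S$ in $\mathfrak H$, $\mathfrak N_\lambda=\ker(S^*-\lambda I)$, $\lambda\in\mathbb C\setminus\mathbb R$, are its defect subspaces, and its defect numbers are $\langle\dim\mathfrak N_i,\dim\mathfrak N_{-i}\rangle$; $\dotplus$ denotes a (non-orthogonal) direct sum. A boundary triplet of $S^*$ is $(\mathcal H,\Gamma_-,\Gamma_+)$, where $\mathcal H$ is a Hilbert space and $\Gamma_\pm:\mathcal D(S^* )\to\mathcal H$ are linear maps with $(S^*f,g)-(f,S^*g)=i[(\Gamma_+f,\Gamma_+g)_{\mathcal H}-(\Gamma_-f,\Gamma_-g)_{\mathcal H}]$ for all $f,g\in\mathcal D(S^* )$ and $(\Gamma_-,\Gamma_+):\mathcal D(S^* )\to\mathcal H\oplus\mathcal H$ surjective. For $\lambda\in\mathbb C_+$ let $A_\lambda=S^*\upharpoonright_{\mathcal D(S)\dotplus\mathfrak N_\lambda}$; there is a bounded operator $\Theta(\lambda)$ in $\mathcal H$ such that $\mathcal D(A_\lambda)=\{f\in\mathcal D(S^* ):\Theta(\lambda)\Gamma_+f=\Gamma_-f\}$; $\Theta(\cdot)$ is called the characteristic function of $S$ associated with the triplet.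 A closed densely defined symmetric operator with equal nonzero defect numbers is called a Phillips symmetric operator (PSO) if its characteristic function is constant on $\mathbb C_+$ (this property does not depend on the choice of boundary triplet). *)

From Stdlib Require Import Reals List.
Open Scope R_scope.
Set Implicit Arguments.

Record Cplx := mkC { re : R ; im : R }.
Definition C0 : Cplx := mkC 0 0.
Definition C1 : Cplx := mkC 1 0.
Definition Ci : Cplx := mkC 0 1.
Definition Cadd (a b : Cplx) : Cplx := mkC (re a + re b) (im a + im b).
Definition Copp (a : Cplx) : Cplx := mkC (- re a) (- im a).
Definition Csub (a b : Cplx) : Cplx := Cadd a (Copp b).
Definition Cmul (a b : Cplx) : Cplx :=
  mkC (re a * re b - im a * im b) (re a * im b + im a * re b).
Definition Cconj (a : Cplx) : Cplx := mkC (re a) (- im a).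

Definition Cplus (z : Cplx) : Prop := 0 < im z.

Record HilbertSpace := {
  carrier :> Type ;
  hzero : carrier ;
  hadd : carrier -> carrier -> carrier ;
  hopp : carrier -> carrier ;
  hscal : Cplx -> carrier -> carrier ;
  inner : carrier -> carrier -> Cplx ;
  hadd_assoc : forall x y z, hadd x (hadd y z) = hadd (hadd x y) z ;
  hadd_comm : forall x y, hadd x y = hadd y x ;
  hadd_0 : forall x, hadd x hzero = x ;
  hadd_opp : forall x, hadd x (hopp x) = hzero ;
  hscal_1 : forall x, hscal C1 x = x ;
  hscal_assoc : forall a b x, hscal a (hscal b x) = hscal (Cmul a b) x ;
  hscal_distr_v : forall a x y, hscal a (hadd x y) = hadd (hscal a x) (hscal a y) ;
  hscal_distr_s : forall a b x, hscal (Cadd a b) x = hadd (hscal a x) (hscal b x) ;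
  inner_add_l : forall x y z, inner (hadd x y) z = Cadd (inner x z) (inner y z) ;
  inner_scal_l : forall a x y, inner (hscal a x) y = Cmul a (inner x y) ;
  inner_conj : forall x y, inner y x = Cconj (inner x y) ;
  inner_pos : forall x, 0 <= re (inner x x) ;
  inner_def : forall x, inner x x = C0 -> x = hzero ;
  complete : forall u : nat -> carrier,
    (forall eps, 0 < eps -> exists N, forall m n, (N <= m)%nat -> (N <= n)%nat ->
        sqrt (re (inner (hadd (u m) (hopp (u n))) (hadd (u m) (hopp (u n))))) < eps) ->
    exists x, forall eps, 0 < eps -> exists N, forall n, (N <= n)%nat ->
        sqrt (re (inner (hadd (u n) (hopp x)) (hadd (u n) (hopp x)))) < eps
}.

Arguments hzero {h}.
Arguments hadd {h}.
Arguments hopp {h}.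
Arguments hscal {h}.
Arguments inner {h}.

Definition hsub {H : HilbertSpace} (x y : H) : H := hadd x (hopp y).
Definition hnorm {H : HilbertSpace} (x : H) : R := sqrt (re (inner x x)).

Definition converges {H : HilbertSpace} (u : nat -> H) (x : H) : Prop :=
  forall eps, 0 < eps -> exists N, forall n, (N <= n)%nat -> hnorm (hsub (u n) x) < eps.

Definition separable (H : HilbertSpace) : Prop :=
  exists d : nat -> H, forall (x : H) eps, 0 < eps -> exists n, hnorm (hsub x (d n)) < eps.

Definition is_subspace {H : HilbertSpace} (P : H -> Prop) : Prop :=
  P hzero /\ (forall x y, P x -> P y -> P (hadd x y)) /\
  (forall a x, P x -> P (hscal a x)).

Definition lin_on {H K : HilbertSpace} (P : H -> Prop) (T : H -> K) : Prop :=
  forall a b x y, P x -> P y ->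
    T (hadd (hscal a x) (hscal b y)) = hadd (hscal a (T x)) (hscal b (T y)).

Definition bounded_op {K : HilbertSpace} (B : K -> K) : Prop :=
  lin_on (fun _ => True) B /\ exists M, forall x, hnorm (B x) <= M * hnorm x.

(* An (unbounded) linear operator in H: domain D and action T (meaningful on D). *)
Definition lin_operator {H : HilbertSpace} (D : H -> Prop) (T : H -> H) : Prop :=
  is_subspace D /\ lin_on D T.

Definition densely_defined {H : HilbertSpace} (D : H -> Prop) : Prop :=
  forall (x : H) eps, 0 < eps -> exists y, D y /\ hnorm (hsub x y) < eps.

Definition closed_op {H : HilbertSpace} (D : H -> Prop) (T : H -> H) : Prop :=
  forall (u : nat -> H) x y, (forall n, D (u n)) -> converges u x ->
    converges (fun n => T (u n)) y -> D x /\ T x = y.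

Definition symmetric_op {H : HilbertSpace} (D : H -> Prop) (T : H -> H) : Prop :=
  forall f g, D f -> D g -> inner (T f) g = inner f (T g).

(* graph of the adjoint S^star: S^star g = h *)
Definition adj {H : HilbertSpace} (D : H -> Prop) (T : H -> H) (g h : H) : Prop :=
  forall f, D f -> inner (T f) g = inner f h.

Definition adj_dom {H : HilbertSpace} (D : H -> Prop) (T : H -> H) (g : H) : Prop :=
  exists h, adj D T g h.

(* defect subspace N_lambda = ker (S^* - lambda I) *)
Definition defect {H : HilbertSpace} (D : H -> Prop) (T : H -> H) (l : Cplx) (g : H) : Prop :=
  adj D T g (hscal l g).

Fixpoint lincomb {H : HilbertSpace} {I : Type} (e : I -> H) (l : list (Cplx * I)) : H :=
  match l with
  | nil => hzero
  | cons (a, i) rest => hadd (hscal a (e i)) (lincomb e rest)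
  end.

Definition onb {H : HilbertSpace} {I : Type} (P : H -> Prop) (e : I -> H) : Prop :=
  (forall i, P (e i)) /\
  (forall i, inner (e i) (e i) = C1) /\
  (forall i j, i <> j -> inner (e i) (e j) = C0) /\
  (forall x, P x -> forall eps, 0 < eps -> exists l, hnorm (hsub x (lincomb e l)) < eps).

(* dim P = dim Q : both have orthonormal bases of the same cardinality *)
Definition same_dim {H : HilbertSpace} (P Q : H -> Prop) : Prop :=
  exists (I : Type) (e f : I -> H), onb P e /\ onb Q f.

Definition nonzero_sub {H : HilbertSpace} (P : H -> Prop) : Prop :=
  exists x, P x /\ x <> hzero.

Definition equal_nonzero_defect {H : HilbertSpace} (D : H -> Prop) (T : H -> H) : Prop :=
  same_dim (defect D T Ci) (defect D T (Copp Ci)) /\ nonzero_sub (defect D T Ci).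

Definition boundary_triplet {H : HilbertSpace} (D : H -> Prop) (T : H -> H)
    (K : HilbertSpace) (Gm Gp : H -> K) : Prop :=
  lin_on (adj_dom D T) Gm /\ lin_on (adj_dom D T) Gp /\
  (forall f f' g g', adj D T f f' -> adj D T g g' ->
     Csub (inner f' g) (inner f g') =
     Cmul Ci (Csub (inner (Gp f) (Gp g)) (inner (Gm f) (Gm g)))) /\
  (forall a b : K, exists f, adj_dom D T f /\ Gm f = a /\ Gp f = b).

Definition domA {H : HilbertSpace} (D : H -> Prop) (T : H -> H) (l : Cplx) (f : H) : Prop :=
  exists g h, D g /\ defect D T l h /\ f = hadd g h.

Definition char_fun {H : HilbertSpace} (D : H -> Prop) (T : H -> H)
    (K : HilbertSpace) (Gm Gp : H -> K) (Theta : Cplx -> K -> K) : Prop :=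
  forall l, Cplus l ->
    bounded_op (Theta l) /\
    (forall f, domA D T l f <-> (adj_dom D T f /\ Theta l (Gp f) = Gm f)).

Definition phillips {H : HilbertSpace} (D : H -> Prop) (T : H -> H) : Prop :=
  lin_operator D T /\ densely_defined D /\ closed_op D T /\ symmetric_op D T /\
  equal_nonzero_defect D T /\
  exists (K : HilbertSpace) (Gm Gp : H -> K) (Theta : Cplx -> K -> K),
    boundary_triplet D T K Gm Gp /\ char_fun D T K Gm Gp Theta /\
    (forall l m, Cplus l -> Cplus m -> forall x, Theta l x = Theta m x).

(* Write x in D(S^* ) as a + b + c with a in D(S), b in N_i, c in N_{-i} (von Neumann's
   formula), and let V : N_{-i} -> N_i be the unitary sending an orthonormal basis of N_{-i}
   to one of N_i indexed by the same set. Then (N_i, sqrt 2 V c, sqrt 2 b) is a boundary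
   triplet, and D(S) + N_i is exactly the kernel of Gamma_-.
   If N_l is contained in D(S) + N_m for all l, m in C_+, then all D(A_l) = D(S) + N_l
   coincide with D(S) + N_i = ker Gamma_-, so the characteristic function is identically 0.
   Conversely, D(A_l) is cut out by Theta(l) Gamma_+ f = Gamma_- f and contains N_l, so a
   constant Theta puts N_l into every D(A_m). *)

From Pilot Require Import Defs.
From Stdlib Require Import Reals List Lra Psatz.
From Stdlib Require Import Classical ClassicalEpsilon ProofIrrelevance.
Open Scope R_scope.
(* [Reals] also exports a [C1] (from [Cos_rel]). *)
Notation C1 := Defs.C1.

Arguments hadd_assoc {h}. Arguments hadd_comm {h}. Arguments hadd_0 {h}. Arguments hadd_opp {h}.
Arguments hscal_1 {h}. Arguments hscal_assoc {h}. Arguments hscal_distr_v {h}.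
Arguments hscal_distr_s {h}. Arguments inner_add_l {h}. Arguments inner_scal_l {h}.
Arguments inner_conj {h}. Arguments inner_pos {h}. Arguments inner_def {h}.
Arguments complete {h}.

Lemma Cplx_ext (a b : Cplx) : re a = re b -> im a = im b -> a = b.
Proof. destruct a, b; simpl; intros -> ->; reflexivity. Qed.

Ltac cunfold := unfold Csub, Cadd, Copp, Cmul, Cconj, C0, C1, Ci in *; simpl in *.
Ltac cring := apply Cplx_ext; cunfold; first [ring | field | lra].

Lemma Csub_eq0 (a b : Cplx) : Csub a b = C0 -> a = b.
Proof.
  intro E. apply (f_equal re) in E as E1. apply (f_equal im) in E as E2.
  cunfold. apply Cplx_ext; lra.
Qed.

Section VectorAlgebra.
Context {H : HilbertSpace}.

Lemma hadd_0_l (x : H) : hadd hzero x = x.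
Proof. rewrite hadd_comm; apply hadd_0. Qed.

Lemma hadd_cancel_l (x y z : H) : hadd x y = hadd x z -> y = z.
Proof.
  intro E.
  assert (E2 : hadd (hopp x) (hadd x y) = hadd (hopp x) (hadd x z)) by now rewrite E.
  now rewrite !hadd_assoc, (hadd_comm (hopp x) x), hadd_opp, !hadd_0_l in E2.
Qed.

Lemma hscal_0 (x : H) : hscal C0 x = hzero.
Proof.
  apply (hadd_cancel_l (hscal C0 x)). rewrite hadd_0, <- hscal_distr_s.
  f_equal. cring.
Qed.

Lemma hopp_scal (x : H) : hopp x = hscal (Copp C1) x.
Proof.
  apply (hadd_cancel_l x). rewrite hadd_opp, <- (hscal_0 x).
  replace C0 with (Cadd C1 (Copp C1)) by cring.
  now rewrite hscal_distr_s, hscal_1.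
Qed.

Lemma inner_0_l (y : H) : inner hzero y = C0.
Proof. rewrite <- (hscal_0 hzero), inner_scal_l. cring. Qed.

Lemma inner_0_r (y : H) : inner y hzero = C0.
Proof. rewrite inner_conj, inner_0_l. cring. Qed.

Lemma inner_add_r (x y z : H) : inner x (hadd y z) = Cadd (inner x y) (inner x z).
Proof. rewrite inner_conj, inner_add_l, (inner_conj y x), (inner_conj z x). cring. Qed.

Lemma inner_scal_r (a : Cplx) (x y : H) : inner x (hscal a y) = Cmul (Cconj a) (inner x y).
Proof. rewrite inner_conj, inner_scal_l, (inner_conj y x). cring. Qed.

Lemma inner_opp_l (x y : H) : inner (hopp x) y = Copp (inner x y).
Proof. rewrite hopp_scal, inner_scal_l. cring. Qed.

Lemma inner_opp_r (x y : H) : inner x (hopp y) = Copp (inner x y).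
Proof. rewrite hopp_scal, inner_scal_r. cring. Qed.

Lemma inner_sub_l (x y z : H) : inner (hsub x y) z = Csub (inner x z) (inner y z).
Proof. unfold hsub. rewrite inner_add_l, inner_opp_l. cring. Qed.

Lemma inner_sub_r (x y z : H) : inner z (hsub x y) = Csub (inner z x) (inner z y).
Proof. unfold hsub. rewrite inner_add_r, inner_opp_r. cring. Qed.

Lemma im_inner_self (x : H) : im (inner x x) = 0.
Proof.
  pose proof (f_equal im (inner_conj x x)) as E. cunfold. lra.
Qed.

Lemma re_inner_self_eq0 (x : H) : re (inner x x) = 0 -> x = hzero.
Proof. intro E. apply inner_def, Cplx_ext; [exact E | apply im_inner_self]. Qed.

Lemma hsub_eq0 (x y : H) : hsub x y = hzero -> x = y.
Proof.
  intro E. apply (hadd_cancel_l (hopp y)).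
  now rewrite (hadd_comm _ y), hadd_opp, hadd_comm.
Qed.

Lemma inner_ext (x y : H) : (forall z, inner x z = inner y z) -> x = y.
Proof.
  intro E. apply hsub_eq0, inner_def.
  rewrite inner_sub_l, E. cring.
Qed.

End VectorAlgebra.

Ltac hexpand := repeat progress rewrite ?inner_add_l, ?inner_scal_l, ?inner_opp_l,
  ?inner_sub_l, ?inner_0_l, ?inner_add_r, ?inner_scal_r, ?inner_opp_r, ?inner_sub_r, ?inner_0_r.
Ltac hexpand_in h := repeat progress rewrite ?inner_add_l, ?inner_scal_l, ?inner_opp_l,
  ?inner_sub_l, ?inner_0_l, ?inner_add_r, ?inner_scal_r, ?inner_opp_r, ?inner_sub_r,
  ?inner_0_r in h.
(* Vector identities are checked by testing against an arbitrary vector. *)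
Ltac hring := apply inner_ext; let z := fresh "z" in intro z; unfold hsub; hexpand; cring.

Definition RC (r : R) : Cplx := mkC r 0.
Definition Cmod (a : Cplx) : R := sqrt (re a * re a + im a * im a).

Lemma Cmod_ge0 (a : Cplx) : 0 <= Cmod a.
Proof. apply sqrt_pos. Qed.

Lemma Rabs_eq0_small (r K : R) : (forall eps, 0 < eps -> Rabs r <= K * eps) -> r = 0.
Proof.
  intro Hs. destruct (Req_dec r 0) as [|Hr]; [assumption|exfalso].
  pose proof (Rabs_pos_lt r Hr).
  destruct (Rle_lt_dec K 0).
  - specialize (Hs 1 Rlt_0_1). lra.
  - specialize (Hs (Rabs r / (2 * K)) ltac:(apply Rdiv_lt_0_compat; lra)).
    replace (K * (Rabs r / (2 * K))) with (Rabs r / 2) in Hs by (field; lra). lra.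
Qed.

Section Norm.
Context {H : HilbertSpace}.

Definition hnorm2 (x : H) : R := re (inner x x).

Lemma hnorm2_ge0 (x : H) : 0 <= hnorm2 x.
Proof. apply inner_pos. Qed.

Lemma hnorm_ge0 (x : H) : 0 <= hnorm x.
Proof. apply sqrt_pos. Qed.

Lemma hnorm_sqr (x : H) : hnorm x * hnorm x = hnorm2 x.
Proof. apply sqrt_sqrt, hnorm2_ge0. Qed.

Lemma hnorm2_scal (a : Cplx) (x : H) :
  hnorm2 (hscal a x) = (re a * re a + im a * im a) * hnorm2 x.
Proof. unfold hnorm2. hexpand. pose proof (im_inner_self x). cunfold. nra. Qed.

Lemma hnorm_scal (a : Cplx) (x : H) : hnorm (hscal a x) = Cmod a * hnorm x.
Proof.
  unfold hnorm, Cmod. fold (hnorm2 (hscal a x)). rewrite hnorm2_scal.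
  apply sqrt_mult_alt. nra.
Qed.

Lemma hnorm2_add (x y : H) : hnorm2 (hadd x y) = hnorm2 x + hnorm2 y + 2 * re (inner x y).
Proof. unfold hnorm2. hexpand. rewrite (inner_conj y x). cunfold. ring. Qed.

Lemma hnorm_eq0 (x : H) : hnorm x = 0 -> x = hzero.
Proof.
  intro E. apply re_inner_self_eq0. fold (hnorm2 x). rewrite <- hnorm_sqr, E. ring.
Qed.

Lemma hnorm_0 : hnorm (@hzero H) = 0.
Proof. unfold hnorm. rewrite inner_0_l. apply sqrt_0. Qed.

Lemma hnorm_lt (x : H) (eps : R) : 0 < eps -> hnorm2 x < eps * eps -> hnorm x < eps.
Proof.
  intros He Hx. unfold hnorm. rewrite <- (sqrt_square eps) by lra.
  apply sqrt_lt_1_alt. split; [apply hnorm2_ge0 | exact Hx].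
Qed.

Lemma hnorm_le (x y : H) : hnorm2 x <= hnorm2 y -> hnorm x <= hnorm y.
Proof. apply sqrt_le_1_alt. Qed.

Lemma Cauchy_Schwarz_re (x y : H) : Rabs (re (inner x y)) <= hnorm x * hnorm y.
Proof.
  unfold hnorm. rewrite <- sqrt_mult_alt by apply inner_pos.
  rewrite <- sqrt_Rsqr_abs. apply sqrt_le_1_alt. unfold Rsqr.
  fold (hnorm2 x) (hnorm2 y). set (r := re (inner x y)).
  destruct (Req_dec (hnorm2 y) 0) as [E|E].
  - apply re_inner_self_eq0 in E. subst y. unfold r, hnorm2.
    rewrite inner_0_r, inner_0_l. cunfold. nra.
  - pose proof (hnorm2_ge0 y).
    (* 0 <= |x + t y|^2 at the minimizing real t = - r / |y|^2 *)
    pose proof (hnorm2_ge0 (hadd x (hscal (RC (- r / hnorm2 y)) y))) as P.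
    rewrite hnorm2_add, hnorm2_scal in P. hexpand_in P. unfold RC in P. cunfold.
    fold r in P. fold (hnorm2 x) (hnorm2 y) in P.
    assert (Q : 0 <= hnorm2 x - r * r / hnorm2 y).
    { eapply Rle_trans; [exact P|]. right. field. exact E. }
    apply Rmult_le_compat_r with (r := hnorm2 y) in Q; [|lra].
    replace ((hnorm2 x - r * r / hnorm2 y) * hnorm2 y) with
      (hnorm2 x * hnorm2 y - r * r) in Q by (field; exact E). lra.
Qed.

Lemma Cauchy_Schwarz_im (x y : H) : Rabs (im (inner x y)) <= hnorm x * hnorm y.
Proof.
  replace (im (inner x y)) with (re (inner x (hscal Ci y))) by (hexpand; cunfold; ring).
  replace (hnorm y) with (hnorm (hscal Ci y)).
  - apply Cauchy_Schwarz_re.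
  - rewrite hnorm_scal. unfold Cmod, Ci; simpl.
    replace (0 * 0 + 1 * 1) with 1 by ring. rewrite sqrt_1. ring.
Qed.

Lemma hnorm_triangle (x y : H) : hnorm (hadd x y) <= hnorm x + hnorm y.
Proof.
  pose proof (hnorm_ge0 x). pose proof (hnorm_ge0 y).
  unfold hnorm at 1. rewrite <- (sqrt_Rsqr (hnorm x + hnorm y)) by lra.
  apply sqrt_le_1_alt. fold (hnorm2 (hadd x y)). rewrite hnorm2_add.
  pose proof (Cauchy_Schwarz_re x y). pose proof (Rle_abs (re (inner x y))).
  unfold Rsqr. rewrite <- (hnorm_sqr x), <- (hnorm_sqr y). nra.
Qed.

Lemma hdist_sym (x y : H) : hnorm (hsub x y) = hnorm (hsub y x).
Proof.
  replace (hsub x y) with (hscal (Copp C1) (hsub y x)) by hring.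
  rewrite hnorm_scal. unfold Cmod; simpl.
  replace (_ * _ + _ * _) with 1 by ring. rewrite sqrt_1. ring.
Qed.

Lemma hdist_triangle (x y z : H) : hnorm (hsub x z) <= hnorm (hsub x y) + hnorm (hsub y z).
Proof.
  replace (hsub x z) with (hadd (hsub x y) (hsub y z)) by hring. apply hnorm_triangle.
Qed.

Lemma hnorm_le_sub (x y : H) : hnorm x <= hnorm y + hnorm (hsub x y).
Proof.
  replace x with (hadd y (hsub x y)) at 1 by hring. apply hnorm_triangle.
Qed.

Lemma hnorm_eq0_small (x : H) (K : R) :
  (forall eps, 0 < eps -> hnorm x <= K * eps) -> x = hzero.
Proof.
  intro Hs. apply hnorm_eq0, (Rabs_eq0_small _ K). intros eps He.
  rewrite Rabs_pos_eq by apply hnorm_ge0. auto.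
Qed.

Lemma hvec_eq_small (x y : H) (K : R) :
  (forall eps, 0 < eps -> hnorm (hsub x y) <= K * eps) -> x = y.
Proof. intro Hs. apply hsub_eq0, (hnorm_eq0_small _ K), Hs. Qed.

End Norm.

Lemma Cplx_eq0_small (c : Cplx) (K : R) :
  (forall eps, 0 < eps -> Rabs (re c) <= K * eps /\ Rabs (im c) <= K * eps) -> c = C0.
Proof.
  intro Hs. apply Cplx_ext; apply (Rabs_eq0_small _ K); intros; apply Hs; assumption.
Qed.

Lemma inv_INR_S_lt (d : R) : 0 < d -> exists N, forall n, (N <= n)%nat -> / (INR n + 1) < d.
Proof.
  intros Hd. destruct (archimed_cor1 d Hd) as [N [HN HN0]]. exists N. intros n Hn.
  apply le_INR in Hn. assert (0 < INR N) by (apply lt_0_INR; auto).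
  eapply Rle_lt_trans; [|exact HN]. apply Rinv_le_contravar; lra.
Qed.

Lemma inv_INR_S_pos (n : nat) : 0 < / (INR n + 1).
Proof. apply Rinv_0_lt_compat. pose proof (pos_INR n). lra. Qed.

Section Limits.
Context {H : HilbertSpace}.

Definition cauchy (u : nat -> H) : Prop :=
  forall eps, 0 < eps -> exists N, forall m n, (N <= m)%nat -> (N <= n)%nat ->
    hnorm (hsub (u m) (u n)) < eps.

Lemma cauchy_converges (u : nat -> H) : cauchy u -> exists x, converges u x.
Proof. apply complete. Qed.

Lemma converges_cauchy (u : nat -> H) (x : H) : converges u x -> cauchy u.
Proof.
  intros Hx eps He. destruct (Hx (eps / 2)) as [N HN]; [lra|]. exists N. intros m n Hm Hn.
  pose proof (hdist_triangle (u m) x (u n)) as Tr. rewrite (hdist_sym x (u n)) in Tr.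
  specialize (HN m Hm) as A. specialize (HN n Hn). lra.
Qed.

Lemma converges_unique (u : nat -> H) (x y : H) : converges u x -> converges u y -> x = y.
Proof.
  intros Hx Hy. apply (hvec_eq_small x y 2). intros eps He.
  destruct (Hx eps He) as [N1 H1], (Hy eps He) as [N2 H2].
  specialize (H1 (N1 + N2)%nat ltac:(lia)). specialize (H2 (N1 + N2)%nat ltac:(lia)).
  pose proof (hdist_triangle x (u (N1 + N2)%nat) y) as Tr.
  rewrite (hdist_sym x (u _)) in Tr. lra.
Qed.

Lemma converges_add (u v : nat -> H) (x y : H) : converges u x -> converges v y ->
  converges (fun n => hadd (u n) (v n)) (hadd x y).
Proof.
  intros Hx Hy eps He.
  destruct (Hx (eps / 2)) as [N1 H1]; [lra|]. destruct (Hy (eps / 2)) as [N2 H2]; [lra|].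
  exists (N1 + N2)%nat. intros n Hn.
  specialize (H1 n ltac:(lia)). specialize (H2 n ltac:(lia)).
  replace (hsub (hadd (u n) (v n)) (hadd x y)) with (hadd (hsub (u n) x) (hsub (v n) y))
    by hring.
  pose proof (hnorm_triangle (hsub (u n) x) (hsub (v n) y)). lra.
Qed.

Lemma converges_scal (u : nat -> H) (x : H) (a : Cplx) :
  converges u x -> converges (fun n => hscal a (u n)) (hscal a x).
Proof.
  intros Hx eps He. pose proof (Cmod_ge0 a).
  destruct (Hx (eps / (Cmod a + 1))) as [N HN]; [apply Rdiv_lt_0_compat; lra|].
  exists N. intros n Hn. specialize (HN n Hn).
  replace (hsub (hscal a (u n)) (hscal a x)) with (hscal a (hsub (u n) x)) by hring.
  rewrite hnorm_scal. pose proof (hnorm_ge0 (hsub (u n) x)).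
  apply Rmult_lt_compat_r with (r := Cmod a + 1) in HN; [|lra].
  unfold Rdiv in HN. rewrite Rmult_assoc, Rinv_l in HN; nra.
Qed.

End Limits.

Section Subspace.
Context {H : HilbertSpace} (P : H -> Prop) (HP : is_subspace P).

Lemma subspace_0 : P hzero.
Proof. apply HP. Qed.

Lemma subspace_add (x y : H) : P x -> P y -> P (hadd x y).
Proof. apply HP. Qed.

Lemma subspace_scal (a : Cplx) (x : H) : P x -> P (hscal a x).
Proof. apply HP. Qed.

Lemma subspace_opp (x : H) : P x -> P (hopp x).
Proof. intro. rewrite hopp_scal. now apply subspace_scal. Qed.

Lemma subspace_sub (x y : H) : P x -> P y -> P (hsub x y).
Proof. intros. apply subspace_add; auto using subspace_opp. Qed.

Lemma subspace_lincomb {I : Type} (g : I -> H) :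
  (forall i, P (g i)) -> forall l, P (lincomb g l).
Proof.
  intros Hg l. induction l as [|[a i] l IH]; simpl.
  - apply subspace_0.
  - apply subspace_add; auto using subspace_scal.
Qed.

End Subspace.

Section Operator.
Context {H : HilbertSpace} (D : H -> Prop) (T : H -> H).
Hypothesis HL : lin_operator D T.

Lemma op_add (x y : H) : D x -> D y -> T (hadd x y) = hadd (T x) (T y).
Proof.
  intros Hx Hy. pose proof (proj2 HL C1 C1 x y Hx Hy) as E. now rewrite !hscal_1 in E.
Qed.

Lemma op_scal (a : Cplx) (x : H) : D x -> T (hscal a x) = hscal a (T x).
Proof.
  intro Hx. pose proof (proj2 HL a C0 x x Hx Hx) as E. now rewrite !hscal_0, !hadd_0 in E.
Qed.

Lemma op_sub (x y : H) : D x -> D y -> T (hsub x y) = hsub (T x) (T y).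
Proof.
  intros Hx Hy. unfold hsub. rewrite !hopp_scal, op_add, op_scal; auto.
  apply (subspace_scal D (proj1 HL)), Hy.
Qed.

End Operator.

Section Adjoint.
Context {H : HilbertSpace} (D : H -> Prop) (T : H -> H).

Lemma adj_of_dom (g : H) : symmetric_op D T -> D g -> adj D T g (T g).
Proof. intros HS Hg f Hf. now apply HS. Qed.

Lemma adj_0 : adj D T hzero hzero.
Proof. intros f Hf. now rewrite !inner_0_r. Qed.

Lemma adj_add (g h g' h' : H) : adj D T g h -> adj D T g' h' -> adj D T (hadd g g') (hadd h h').
Proof. intros A1 A2 f Hf. hexpand. now rewrite (A1 f Hf), (A2 f Hf). Qed.

Lemma adj_scal (a : Cplx) (g h : H) : adj D T g h -> adj D T (hscal a g) (hscal a h).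
Proof. intros A f Hf. hexpand. now rewrite (A f Hf). Qed.

Lemma adj_sub (g h g' h' : H) : adj D T g h -> adj D T g' h' -> adj D T (hsub g g') (hsub h h').
Proof. intros A1 A2 f Hf. hexpand. now rewrite (A1 f Hf), (A2 f Hf). Qed.

Lemma orthogonal_dense_eq0 (w : H) :
  densely_defined D -> (forall f, D f -> inner f w = C0) -> w = hzero.
Proof.
  intros Hdense Hw. apply (hnorm_eq0_small w 1). intros eps He.
  destruct (Hdense w eps He) as [f [Hf Hd]].
  assert (E : hnorm2 w = re (inner (hsub w f) w)).
  { unfold hnorm2. rewrite inner_sub_l, inner_conj, (Hw f Hf). cunfold. ring. }
  pose proof (Cauchy_Schwarz_re (hsub w f) w). pose proof (Rle_abs (re (inner (hsub w f) w))).
  rewrite <- E, <- hnorm_sqr in *. pose proof (hnorm_ge0 w). nra.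
Qed.

Lemma adj_unique (g h1 h2 : H) :
  densely_defined D -> adj D T g h1 -> adj D T g h2 -> h1 = h2.
Proof.
  intros Hdense A1 A2. apply hsub_eq0, (orthogonal_dense_eq0 _ Hdense).
  intros f Hf. rewrite inner_sub_r, <- (A1 f Hf), <- (A2 f Hf). cring.
Qed.

Lemma defect_subspace (l : Cplx) : is_subspace (defect D T l).
Proof.
  split; [|split].
  - unfold defect. replace (hscal l hzero) with (@hzero H) by hring. apply adj_0.
  - intros x y Hx Hy. unfold defect. rewrite hscal_distr_v. now apply adj_add.
  - intros a x Hx. unfold defect.
    replace (hscal l (hscal a x)) with (hscal a (hscal l x)) by hring. now apply adj_scal.
Qed.

Lemma defect_closed (l : Cplx) (y : H) :
  (forall eps, 0 < eps -> exists z, defect D T l z /\ hnorm (hsub y z) < eps) ->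
  defect D T l y.
Proof.
  intros Hc f Hf. apply Csub_eq0.
  apply (Cplx_eq0_small _ (hnorm (T f) + hnorm f * Cmod l)). intros eps He.
  destruct (Hc eps He) as [z [Hz Hd]].
  (* the defect equation for z makes the quantity depend only on y - z *)
  replace (Csub (inner (T f) y) (inner f (hscal l y))) with
    (Csub (inner (T f) (hsub y z)) (inner f (hscal l (hsub y z)))).
  2: { pose proof (Hz f Hf) as Ez. hexpand. hexpand_in Ez. rewrite Ez. cring. }
  pose proof (Cauchy_Schwarz_re (T f) (hsub y z)). pose proof (Cauchy_Schwarz_im (T f) (hsub y z)).
  pose proof (Cauchy_Schwarz_re f (hscal l (hsub y z))).
  pose proof (Cauchy_Schwarz_im f (hscal l (hsub y z))).
  rewrite hnorm_scal in *. cunfold.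
  pose proof (hnorm_ge0 (T f)). pose proof (hnorm_ge0 f). pose proof (Cmod_ge0 l).
  assert (hnorm (T f) * hnorm (hsub y z) <= hnorm (T f) * eps)
    by (apply Rmult_le_compat_l; lra).
  assert (hnorm f * (Cmod l * hnorm (hsub y z)) <= hnorm f * (Cmod l * eps))
    by (apply Rmult_le_compat_l; [lra | apply Rmult_le_compat_l; lra]).
  split; (eapply Rle_trans; [apply Rabs_triang|]); rewrite Rabs_Ropp; lra.
Qed.

End Adjoint.

Section Projection.
Context {H : HilbertSpace}.

Definition closed_set (M : H -> Prop) : Prop :=
  forall u y, (forall n, M (u n)) -> converges u y -> M y.

Lemma hnorm2_parallelogram (y a b : H) :
  hnorm2 (hsub a b) = 2 * hnorm2 (hsub y a) + 2 * hnorm2 (hsub y b)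
                      - 4 * hnorm2 (hsub y (hscal (RC (/ 2)) (hadd a b))).
Proof. unfold hnorm2, RC. hexpand. cunfold. field. Qed.

Lemma dist_infimum (M : H -> Prop) (y : H) : M hzero ->
  exists d, 0 <= d /\ (forall m, M m -> d <= hnorm (hsub y m)) /\
    (forall e, 0 < e -> exists m, M m /\ hnorm (hsub y m) < d + e).
Proof.
  intro M0. set (E := fun r => exists m, M m /\ r = - hnorm (hsub y m)).
  assert (Eub : is_upper_bound E 0).
  { intros r [m [_ ->]]. pose proof (hnorm_ge0 (hsub y m)). lra. }
  destruct (completeness E (ex_intro _ 0 Eub) (ex_intro _ _ (ex_intro _ hzero (conj M0 eq_refl))))
    as [s [Hub Hlub]].
  exists (- s). split; [|split].
  - pose proof (Hlub 0 Eub). lra.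
  - intros m Hm. assert (E (- hnorm (hsub y m))) as Em by (exists m; auto).
    apply Hub in Em. lra.
  - intros e He. apply NNPP. intro Hn.
    assert (is_upper_bound E (s - e)) as Hb.
    { intros r [m [Hm ->]]. apply Rnot_lt_le. intro Hlt. apply Hn. exists m. split; auto. lra. }
    apply Hlub in Hb. lra.
Qed.

Lemma minimizing_seq_cauchy (M : H -> Prop) (y : H) (d : R) (mm : nat -> H) :
  is_subspace M -> 0 <= d -> (forall m, M m -> d <= hnorm (hsub y m)) ->
  (forall n, M (mm n) /\ hnorm (hsub y (mm n)) < d + / (INR n + 1)) -> cauchy mm.
Proof.
  intros HM Hd0 Hlow Hmm.
  assert (Hpar : forall p q, hnorm2 (hsub (mm p) (mm q)) <=
    2 * (d + / (INR p + 1)) * (d + / (INR p + 1)) +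
    2 * (d + / (INR q + 1)) * (d + / (INR q + 1)) - 4 * d * d).
  { intros p q. rewrite (hnorm2_parallelogram y).
    set (mid := hscal (RC (/ 2)) (hadd (mm p) (mm q))).
    assert (Hmid : d <= hnorm (hsub y mid)).
    { apply Hlow, (subspace_scal M HM), (subspace_add M HM); apply Hmm. }
    destruct (Hmm p) as [_ Hp], (Hmm q) as [_ Hq].
    pose proof (hnorm_ge0 (hsub y (mm p))). pose proof (hnorm_ge0 (hsub y (mm q))).
    rewrite <- !hnorm_sqr.
    assert (hnorm (hsub y (mm p)) * hnorm (hsub y (mm p)) <=
            (d + / (INR p + 1)) * (d + / (INR p + 1))) by (apply Rmult_le_compat; lra).
    assert (hnorm (hsub y (mm q)) * hnorm (hsub y (mm q)) <=
            (d + / (INR q + 1)) * (d + / (INR q + 1))) by (apply Rmult_le_compat; lra).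
    assert (d * d <= hnorm (hsub y mid) * hnorm (hsub y mid)) by (apply Rmult_le_compat; lra).
    lra. }
  intros eps He. set (del := Rmin 1 (eps * eps / (8 * d + 5))).
  assert (Hdel : 0 < del) by (apply Rmin_pos; [lra | apply Rdiv_lt_0_compat; nra]).
  assert (del * (8 * d + 5) <= eps * eps).
  { assert (del <= eps * eps / (8 * d + 5)) as Hr by apply Rmin_r.
    apply Rmult_le_compat_r with (r := 8 * d + 5) in Hr; [|lra].
    unfold Rdiv in Hr. rewrite Rmult_assoc, Rinv_l in Hr; lra. }
  destruct (inv_INR_S_lt del Hdel) as [N HN]. exists N. intros m n Hm Hn.
  apply hnorm_lt; auto. eapply Rle_lt_trans; [apply Hpar|].
  specialize (HN m Hm) as A. specialize (HN n Hn).
  assert (del <= 1) by apply Rmin_l.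
  pose proof (inv_INR_S_pos m). pose proof (inv_INR_S_pos n). nra.
Qed.

Lemma nearest_point_exists (M : H -> Prop) (y : H) : is_subspace M -> closed_set M ->
  exists m, M m /\ forall m', M m' -> hnorm2 (hsub y m) <= hnorm2 (hsub y m').
Proof.
  intros HM Mcl.
  destruct (dist_infimum M y (subspace_0 M HM)) as [d [Hd0 [Hlow Happ]]].
  destruct (choice (fun n m => M m /\ hnorm (hsub y m) < d + / (INR n + 1))) as [mm Hmm].
  { intro n. apply Happ, inv_INR_S_pos. }
  destruct (cauchy_converges mm (minimizing_seq_cauchy M y d mm HM Hd0 Hlow Hmm)) as [m Hm].
  assert (Mm : M m) by (apply (Mcl mm); auto; apply Hmm).
  assert (Hmd : hnorm (hsub y m) <= d).
  { apply Rnot_lt_le. intro Hlt. set (e := (hnorm (hsub y m) - d) / 3).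
    assert (He : 0 < e) by (unfold e; lra).
    destruct (Hm e He) as [N1 HN1], (inv_INR_S_lt e He) as [N2 HN2].
    specialize (HN1 (N1 + N2)%nat ltac:(lia)). specialize (HN2 (N1 + N2)%nat ltac:(lia)).
    destruct (Hmm (N1 + N2)%nat) as [_ Hb].
    pose proof (hdist_triangle y (mm (N1 + N2)%nat) m). unfold e in *. lra. }
  exists m. split; auto. intros m' Hm'. pose proof (Hlow m' Hm').
  rewrite <- !hnorm_sqr. pose proof (hnorm_ge0 (hsub y m)). apply Rmult_le_compat; lra.
Qed.

Lemma nearest_point_orthogonal (M : H -> Prop) (y m : H) : is_subspace M -> M m ->
  (forall m', M m' -> hnorm2 (hsub y m) <= hnorm2 (hsub y m')) ->
  forall z, M z -> inner z (hsub y m) = C0.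
Proof.
  intros HM Mm Hmin z Hz.
  set (c := inner (hsub y m) z). set (nz := hnorm2 z). set (s := / (nz + 1)).
  assert (Hnz : 0 <= nz) by apply hnorm2_ge0.
  assert (Hs : 0 < s) by (apply Rinv_0_lt_compat; lra).
  assert (Hsnz : s * nz < 1).
  { unfold s. apply (Rmult_lt_reg_r (nz + 1)); [lra|].
    rewrite Rmult_assoc, (Rmult_comm nz), <- Rmult_assoc, Rinv_l; lra. }
  specialize (Hmin (hadd m (hscal (Cmul (RC s) c) z))
                   (subspace_add M HM _ _ Mm (subspace_scal M HM _ _ Hz))).
  assert (Hid : hnorm2 (hsub y (hadd m (hscal (Cmul (RC s) c) z))) - hnorm2 (hsub y m) =
                (re c * re c + im c * im c) * (- 2 * s + s * s * nz)).
  { unfold nz, c, RC, hnorm2. hexpand. rewrite (inner_conj z y), (inner_conj z m).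
    pose proof (im_inner_self z) as Ez. cunfold. rewrite Ez. ring. }
  assert (Hc : re c * re c + im c * im c = 0).
  { assert (0 <= re c * re c + im c * im c) by nra.
    assert (- 2 * s + s * s * nz < 0) by nra. nra. }
  rewrite inner_conj. fold c. apply Cplx_ext; cunfold; nra.
Qed.

Lemma orthogonal_projection (M : H -> Prop) (y : H) : is_subspace M -> closed_set M ->
  exists m, M m /\ forall z, M z -> inner z (hsub y m) = C0.
Proof.
  intros HM Mcl. destruct (nearest_point_exists M y HM Mcl) as [m [Mm Hmin]].
  exists m. split; auto. exact (nearest_point_orthogonal M y m HM Mm Hmin).
Qed.

End Projection.

Section VonNeumann.
Context {H : HilbertSpace} (D : H -> Prop) (T : H -> H).
Hypotheses (HL : lin_operator D T) (HS : symmetric_op D T)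
  (Hdense : densely_defined D) (Hcl : closed_op D T).

Definition ran_S_i (y : H) : Prop := exists g, D g /\ y = hadd (T g) (hscal Ci g).

Lemma ran_S_i_subspace : is_subspace ran_S_i.
Proof.
  destruct HL as [HD _]. split; [|split].
  - exists hzero. split; [apply (subspace_0 D HD)|].
    rewrite <- (hscal_0 hzero) at 2 3. rewrite (op_scal D T HL) by apply (subspace_0 D HD).
    hring.
  - intros x y [g [Hg ->]] [g' [Hg' ->]]. exists (hadd g g').
    split; [now apply (subspace_add D HD)|]. rewrite (op_add D T HL) by auto. hring.
  - intros a x [g [Hg ->]]. exists (hscal a g).
    split; [now apply (subspace_scal D HD)|]. rewrite (op_scal D T HL) by auto. hring.
Qed.

Lemma hnorm2_S_i (g : H) : D g -> hnorm2 (hadd (T g) (hscal Ci g)) = hnorm2 (T g) + hnorm2 g.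
Proof.
  intro Hg. rewrite hnorm2_add, hnorm2_scal, inner_scal_r.
  pose proof (f_equal im (HS g g Hg Hg)) as E. rewrite (inner_conj (T g) g) in E.
  cunfold. lra.
Qed.

Lemma ran_S_i_closed : closed_set ran_S_i.
Proof.
  destruct HL as [HD _]. intros u y Hu Hy.
  destruct (choice (fun n g => D g /\ u n = hadd (T g) (hscal Ci g)) Hu) as [g Hg].
  (* by [hnorm2_S_i], both g and T g are Cauchy when u is *)
  assert (Hb : forall m n, hnorm2 (hsub (g m) (g n)) <= hnorm2 (hsub (u m) (u n)) /\
                 hnorm2 (hsub (T (g m)) (T (g n))) <= hnorm2 (hsub (u m) (u n))).
  { intros m n. destruct (Hg m) as [Dm ->], (Hg n) as [Dn ->].
    replace (hsub (hadd (T (g m)) (hscal Ci (g m))) (hadd (T (g n)) (hscal Ci (g n))))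
      with (hadd (T (hsub (g m) (g n))) (hscal Ci (hsub (g m) (g n))))
      by (rewrite (op_sub D T HL) by auto; hring).
    rewrite hnorm2_S_i, (op_sub D T HL)
      by first [assumption | apply (subspace_sub D HD); assumption].
    pose proof (hnorm2_ge0 (hsub (g m) (g n))).
    pose proof (hnorm2_ge0 (hsub (T (g m)) (T (g n)))). lra. }
  pose proof (converges_cauchy u y Hy) as Cu.
  assert (Cg : cauchy g).
  { intros eps He. destruct (Cu eps He) as [N HN]. exists N. intros m n Hm Hn.
    eapply Rle_lt_trans; [|apply (HN m n Hm Hn)]. apply hnorm_le, Hb. }
  assert (CTg : cauchy (fun n => T (g n))).
  { intros eps He. destruct (Cu eps He) as [N HN]. exists N. intros m n Hm Hn.
    eapply Rle_lt_trans; [|apply (HN m n Hm Hn)]. apply hnorm_le, Hb. }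
  destruct (cauchy_converges _ Cg) as [x Hx], (cauchy_converges _ CTg) as [z Hz].
  destruct (Hcl g x z (fun n => proj1 (Hg n)) Hx Hz) as [Dx <-].
  exists x. split; auto. apply (converges_unique u); auto.
  assert (Hlim : converges (fun n => hadd (T (g n)) (hscal Ci (g n))) (hadd (T x) (hscal Ci x)))
    by (apply converges_add, converges_scal; assumption).
  intros eps He. destruct (Hlim eps He) as [N HN]. exists N. intros n Hn.
  rewrite (proj2 (Hg n)). auto.
Qed.

Definition vN_decomp (f a b c : H) : Prop :=
  D a /\ defect D T Ci b /\ defect D T (Copp Ci) c /\ f = hadd (hadd a b) c.

Lemma vN_decomp_exists (f f' : H) : adj D T f f' -> exists a b c, vN_decomp f a b c.
Proof.
  intro Af.
  destruct (orthogonal_projection ran_S_i (hadd f' (hscal Ci f)) ran_S_i_subspace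
              ran_S_i_closed) as [m [[g [Dg ->]] Horth]].
  set (w := hsub (hadd f' (hscal Ci f)) (hadd (T g) (hscal Ci g))).
  assert (Dw : defect D T Ci w).
  { intros phi Hphi. pose proof (Horth _ (ex_intro _ phi (conj Hphi eq_refl))) as E.
    fold w in E. hexpand_in E. hexpand.
    pose proof (f_equal re E). pose proof (f_equal im E). cunfold. apply Cplx_ext; simpl; lra. }
  set (b := hscal (mkC 0 (-1/2)) w).
  assert (Db : defect D T Ci b) by apply (subspace_scal _ (defect_subspace D T Ci)), Dw.
  exists g, b, (hsub (hsub f g) b). split; [|split; [|split]]; auto.
  - unfold defect. replace (hscal (Copp Ci) (hsub (hsub f g) b))
      with (hsub (hsub f' (T g)) (hscal Ci b)).
    + apply adj_sub; [apply adj_sub; [exact Af | apply adj_of_dom; auto] | exact Db].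
    + unfold b, w. apply inner_ext; intro z; unfold hsub; hexpand; apply Cplx_ext; cunfold; lra.
  - hring.
Qed.

Lemma vN_decomp_adj (x a b c : H) : vN_decomp x a b c ->
  adj D T x (hadd (hadd (T a) (hscal Ci b)) (hscal (Copp Ci) c)).
Proof.
  intros [Da [Db [Dc ->]]]. apply adj_add; [apply adj_add|]; auto using adj_of_dom.
Qed.

Lemma vN_decomp_zero (a b c : H) : vN_decomp hzero a b c ->
  a = hzero /\ b = hzero /\ c = hzero.
Proof.
  intro Hd. pose proof (adj_unique D T _ _ _ Hdense (vN_decomp_adj _ _ _ _ Hd) (adj_0 D T))
    as ETa.
  destruct Hd as [Da [Db [Dc E]]].
  (* a = -(b + c) and T a = -(i b - i c); pair them with b and c *)
  assert (Ea : a = hopp (hadd b c)).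
  { apply (hadd_cancel_l (hadd b c)). rewrite hadd_opp, hadd_comm, hadd_assoc. congruence. }
  assert (ETa' : T a = hopp (hadd (hscal Ci b) (hscal (Copp Ci) c))).
  { apply (hadd_cancel_l (hadd (hscal Ci b) (hscal (Copp Ci) c))).
    rewrite hadd_opp, hadd_comm, hadd_assoc. congruence. }
  pose proof (Db a Da) as Eb. pose proof (Dc a Da) as Ec.
  rewrite ETa', Ea in Eb, Ec. hexpand_in Eb. hexpand_in Ec.
  rewrite (inner_conj c b) in Ec. rewrite (inner_conj b c) in Eb.
  pose proof (im_inner_self b). pose proof (im_inner_self c).
  pose proof (f_equal re Eb). pose proof (f_equal re Ec).
  pose proof (f_equal im Eb). pose proof (f_equal im Ec). cunfold.
  assert (Hb0 : b = hzero) by (apply re_inner_self_eq0; lra).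
  assert (Hc0 : c = hzero) by (apply re_inner_self_eq0; lra).
  repeat split; auto. rewrite Ea, Hb0, Hc0. hring.
Qed.

Lemma vN_decomp_lin (s t : Cplx) (x y ax bx cx ay bY cy : H) :
  vN_decomp x ax bx cx -> vN_decomp y ay bY cy ->
  vN_decomp (hadd (hscal s x) (hscal t y)) (hadd (hscal s ax) (hscal t ay))
    (hadd (hscal s bx) (hscal t bY)) (hadd (hscal s cx) (hscal t cy)).
Proof.
  intros [Da [Db [Dc ->]]] [Da' [Db' [Dc' ->]]].
  pose proof (proj1 HL) as HD.
  pose proof (defect_subspace D T Ci) as HNi. pose proof (defect_subspace D T (Copp Ci)) as HNm.
  split; [|split; [|split]].
  - apply (subspace_add D HD); apply (subspace_scal D HD); auto.
  - apply (subspace_add _ HNi); apply (subspace_scal _ HNi); auto.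
  - apply (subspace_add _ HNm); apply (subspace_scal _ HNm); auto.
  - hring.
Qed.

Lemma vN_decomp_unique (f a b c a' b' c' : H) : vN_decomp f a b c -> vN_decomp f a' b' c' ->
  a = a' /\ b = b' /\ c = c'.
Proof.
  intros Hd Hd'.
  pose proof (vN_decomp_lin C1 (Copp C1) _ _ _ _ _ _ _ _ Hd Hd') as Hz.
  replace (hadd (hscal C1 f) (hscal (Copp C1) f)) with (@hzero H) in Hz by hring.
  destruct (vN_decomp_zero _ _ _ Hz) as [E1 [E2 E3]].
  repeat split; apply hsub_eq0; [rewrite <- E1 | rewrite <- E2 | rewrite <- E3]; hring.
Qed.

End VonNeumann.

Section LinearCombination.
Context {H : HilbertSpace} {I : Type}.

Definition orthonormal (g : I -> H) : Prop :=
  (forall i, inner (g i) (g i) = C1) /\ (forall i j, i <> j -> inner (g i) (g j) = C0).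

Lemma onb_orthonormal (P : H -> Prop) (g : I -> H) : onb P g -> orthonormal g.
Proof. intros [_ [A [B _]]]. split; assumption. Qed.

Definition coef_scal (a : Cplx) (l : list (Cplx * I)) : list (Cplx * I) :=
  map (fun p => (Cmul a (fst p), snd p)) l.

Lemma lincomb_app (g : I -> H) (l1 l2 : list (Cplx * I)) :
  lincomb g (l1 ++ l2) = hadd (lincomb g l1) (lincomb g l2).
Proof. induction l1 as [|[a i] l IH]; simpl; [|rewrite IH]; hring. Qed.

Lemma lincomb_coef_scal (g : I -> H) (a : Cplx) (l : list (Cplx * I)) :
  lincomb g (coef_scal a l) = hscal a (lincomb g l).
Proof. induction l as [|[b i] l IH]; simpl; [|rewrite IH]; hring. Qed.

Lemma lincomb_sub (g : I -> H) (l l' : list (Cplx * I)) :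
  hsub (lincomb g l) (lincomb g l') = lincomb g (l ++ coef_scal (Copp C1) l').
Proof. rewrite lincomb_app, lincomb_coef_scal. hring. Qed.

Lemma inner_lincomb_orthonormal (f e : I -> H) : orthonormal f -> orthonormal e ->
  forall l l', inner (lincomb f l) (lincomb f l') = inner (lincomb e l) (lincomb e l').
Proof.
  intros [Nf Of] [Ne Oe].
  assert (Hbasis : forall i j, inner (f i) (f j) = inner (e i) (e j)).
  { intros i j. destruct (classic (i = j)) as [->|Hn].
    - now rewrite Nf, Ne.
    - now rewrite Of, Oe. }
  assert (Hleft : forall i l', inner (f i) (lincomb f l') = inner (e i) (lincomb e l')).
  { intros i l'. induction l' as [|[b j] l' IH]; simpl; hexpand; [reflexivity|].
    now rewrite IH, Hbasis. }
  intros l l'. induction l as [|[a i] l IH]; simpl; hexpand; [reflexivity|].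
  now rewrite IH, Hleft.
Qed.

End LinearCombination.

Section SpanIsometry.
Context {H : HilbertSpace} {I : Type} (f e : I -> H).
Hypotheses (Hf : orthonormal f) (He : orthonormal e).

(* The graph of the isometry sending f i to e i, extended to the closed span of f. *)
Definition span_map (x y : H) : Prop := forall eps, 0 < eps -> exists l,
  hnorm (hsub x (lincomb f l)) < eps /\ hnorm (hsub y (lincomb e l)) < eps.

Lemma hdist_lincomb_orthonormal (l l' : list (Cplx * I)) :
  hnorm (hsub (lincomb f l) (lincomb f l')) = hnorm (hsub (lincomb e l) (lincomb e l')).
Proof. rewrite !lincomb_sub. unfold hnorm. now rewrite (inner_lincomb_orthonormal f e Hf He). Qed.

Lemma span_map_functional (x y1 y2 : H) : span_map x y1 -> span_map x y2 -> y1 = y2.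
Proof.
  intros R1 R2. apply (hvec_eq_small y1 y2 4). intros eps Heps.
  destruct (R1 eps Heps) as [l1 [A1 B1]], (R2 eps Heps) as [l2 [A2 B2]].
  pose proof (hdist_triangle y1 (lincomb e l1) y2).
  pose proof (hdist_triangle (lincomb e l1) (lincomb e l2) y2).
  pose proof (hdist_lincomb_orthonormal l1 l2).
  pose proof (hdist_triangle (lincomb f l1) x (lincomb f l2)).
  pose proof (hdist_sym (lincomb f l1) x). pose proof (hdist_sym (lincomb e l2) y2). lra.
Qed.

Lemma span_map_total (x : H) :
  (forall eps, 0 < eps -> exists l, hnorm (hsub x (lincomb f l)) < eps) ->
  exists y, span_map x y.
Proof.
  intro Ha.
  destruct (choice (fun n l => hnorm (hsub x (lincomb f l)) < / (INR n + 1))) as [ll Hll].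
  { intro n. apply Ha, inv_INR_S_pos. }
  assert (Hc : cauchy (fun n => lincomb e (ll n))).
  { intros eps Heps. destruct (inv_INR_S_lt (eps / 2)) as [N HN]; [lra|].
    exists N. intros m n Hm Hn. rewrite <- hdist_lincomb_orthonormal.
    pose proof (hdist_triangle (lincomb f (ll m)) x (lincomb f (ll n))).
    pose proof (hdist_sym (lincomb f (ll m)) x).
    specialize (Hll m) as A. specialize (Hll n) as B.
    specialize (HN m Hm) as C. specialize (HN n Hn). lra. }
  destruct (cauchy_converges _ Hc) as [y Hy]. exists y. intros eps Heps.
  destruct (Hy eps Heps) as [N1 HN1], (inv_INR_S_lt eps Heps) as [N2 HN2].
  exists (ll (N1 + N2)%nat). split.
  - specialize (Hll (N1 + N2)%nat). specialize (HN2 (N1 + N2)%nat ltac:(lia)). lra.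
  - rewrite hdist_sym. apply HN1. lia.
Qed.

Lemma span_map_lin (a b : Cplx) (x y x' y' : H) : span_map x y -> span_map x' y' ->
  span_map (hadd (hscal a x) (hscal b x')) (hadd (hscal a y) (hscal b y')).
Proof.
  intros R1 R2 eps Heps. pose proof (Cmod_ge0 a). pose proof (Cmod_ge0 b).
  set (eps' := eps / (Cmod a + Cmod b + 1)).
  assert (He' : 0 < eps') by (apply Rdiv_lt_0_compat; lra).
  assert (Hk : (Cmod a + Cmod b) * eps' < eps).
  { unfold eps'. apply (Rmult_lt_reg_r (Cmod a + Cmod b + 1)); [lra|].
    unfold Rdiv. rewrite Rmult_assoc, (Rmult_assoc eps), Rinv_l by lra. nra. }
  assert (G : forall u u' v v' : H, hnorm (hsub u v) < eps' -> hnorm (hsub u' v') < eps' ->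
    hnorm (hsub (hadd (hscal a u) (hscal b u')) (hadd (hscal a v) (hscal b v'))) < eps).
  { intros u u' v v' Hu Hu'.
    replace (hsub (hadd (hscal a u) (hscal b u')) (hadd (hscal a v) (hscal b v')))
      with (hadd (hscal a (hsub u v)) (hscal b (hsub u' v'))) by hring.
    eapply Rle_lt_trans; [apply hnorm_triangle|]. rewrite !hnorm_scal.
    pose proof (hnorm_ge0 (hsub u v)). pose proof (hnorm_ge0 (hsub u' v')).
    assert (Cmod a * hnorm (hsub u v) <= Cmod a * eps') by (apply Rmult_le_compat_l; lra).
    assert (Cmod b * hnorm (hsub u' v') <= Cmod b * eps') by (apply Rmult_le_compat_l; lra).
    lra. }
  destruct (R1 eps' He') as [l [A1 B1]], (R2 eps' He') as [l' [A2 B2]].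
  exists (coef_scal a l ++ coef_scal b l'). rewrite !lincomb_app, !lincomb_coef_scal.
  split; apply G; assumption.
Qed.

Lemma span_map_hnorm (x y : H) : span_map x y -> hnorm x = hnorm y.
Proof.
  intro R1. apply Rminus_diag_uniq, (Rabs_eq0_small _ 2). intros eps Heps.
  destruct (R1 eps Heps) as [l [A B]].
  assert (E : hnorm (lincomb f l) = hnorm (lincomb e l))
    by (unfold hnorm; now rewrite (inner_lincomb_orthonormal f e Hf He)).
  pose proof (hnorm_le_sub x (lincomb f l)). pose proof (hnorm_le_sub y (lincomb e l)).
  pose proof (hnorm_le_sub (lincomb f l) x) as Fx.
  pose proof (hnorm_le_sub (lincomb e l) y) as Ey.
  rewrite hdist_sym in Fx, Ey. apply Rabs_le. lra.
Qed.

(* Polarization: the map preserves the norms of x + x' and x + i x', hence inner products. *)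
Lemma span_map_inner (x y x' y' : H) : span_map x y -> span_map x' y' ->
  inner x x' = inner y y'.
Proof.
  intros R1 R2.
  assert (N : forall u v, span_map u v -> hnorm2 u = hnorm2 v)
    by (intros u v Ruv; now rewrite <- !hnorm_sqr, (span_map_hnorm u v Ruv)).
  pose proof (N _ _ (span_map_lin C1 C1 _ _ _ _ R1 R2)) as N1.
  pose proof (N _ _ (span_map_lin C1 Ci _ _ _ _ R1 R2)) as N2.
  pose proof (N _ _ R1). pose proof (N _ _ R2).
  unfold hnorm2 in *. hexpand_in N1. hexpand_in N2.
  rewrite (inner_conj x x'), (inner_conj y y') in N1, N2.
  pose proof (im_inner_self x). pose proof (im_inner_self y).
  pose proof (im_inner_self x'). pose proof (im_inner_self y').
  cunfold. apply Cplx_ext; lra.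
Qed.

End SpanIsometry.

Lemma span_map_swap {H : HilbertSpace} {I : Type} (f e : I -> H) (x y : H) :
  span_map f e x y -> span_map e f y x.
Proof. intros R1 eps Heps. destruct (R1 eps Heps) as [l [A B]]. exists l. now split. Qed.

Lemma span_map_0 {H : HilbertSpace} {I : Type} (f e : I -> H) : span_map f e hzero hzero.
Proof.
  intros eps Heps. exists nil. simpl.
  replace (hsub (@hzero H) hzero) with (@hzero H) by hring. rewrite hnorm_0. now split.
Qed.

Section ClosedSubspace.
Context {H : HilbertSpace} (P : H -> Prop) (HP : is_subspace P).
Hypothesis HPcl :
  forall y, (forall eps, 0 < eps -> exists z, P z /\ hnorm (hsub y z) < eps) -> P y.

Definition subspace_elt : Type := {x : H | P x}.

Lemma subspace_elt_eq (x y : subspace_elt) : proj1_sig x = proj1_sig y -> x = y.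
Proof.
  destruct x as [x px], y as [y py]; simpl; intros ->. f_equal. apply proof_irrelevance.
Qed.

Definition subspace_hilbert : HilbertSpace.
Proof.
  refine (@Build_HilbertSpace subspace_elt
    (exist _ hzero (subspace_0 P HP))
    (fun x y => exist _ (hadd (proj1_sig x) (proj1_sig y))
                  (subspace_add P HP _ _ (proj2_sig x) (proj2_sig y)))
    (fun x => exist _ (hopp (proj1_sig x)) (subspace_opp P HP _ (proj2_sig x)))
    (fun a x => exist _ (hscal a (proj1_sig x)) (subspace_scal P HP a _ (proj2_sig x)))
    (fun x y => inner (proj1_sig x) (proj1_sig y)) _ _ _ _ _ _ _ _ _ _ _ _ _ _);
    try (intros; apply subspace_elt_eq; simpl;
         first [apply hadd_assoc | apply hadd_comm | apply hadd_0 | apply hadd_opp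
               | apply hscal_1 | apply hscal_assoc | apply hscal_distr_v | apply hscal_distr_s
               | apply inner_def; assumption]);
    try (intros; simpl; first [apply inner_add_l | apply inner_scal_l | apply inner_conj
                              | apply inner_pos]).
  intros u Hu. destruct (complete (fun n => proj1_sig (u n)) Hu) as [x Hx].
  assert (Px : P x).
  { apply HPcl. intros eps Heps. destruct (Hx eps Heps) as [N HN].
    exists (proj1_sig (u N)). split; [apply proj2_sig|]. rewrite hdist_sym. apply HN; lia. }
  now exists (exist _ x Px).
Defined.

Definition sval (x : subspace_hilbert) : H := proj1_sig (x : subspace_elt).

Lemma sval_inj (x y : subspace_hilbert) : sval x = sval y -> x = y.
Proof. apply subspace_elt_eq. Qed.

Lemma sval_in (x : subspace_hilbert) : P (sval x).
Proof. exact (proj2_sig (x : subspace_elt)). Qed.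

Lemma sval_hzero : sval hzero = hzero.
Proof. reflexivity. Qed.

Lemma sval_hadd (x y : subspace_hilbert) : sval (hadd x y) = hadd (sval x) (sval y).
Proof. reflexivity. Qed.

Lemma sval_hscal (a : Cplx) (x : subspace_hilbert) : sval (hscal a x) = hscal a (sval x).
Proof. reflexivity. Qed.

Lemma inner_sval (x y : subspace_hilbert) : inner x y = inner (sval x) (sval y).
Proof. reflexivity. Qed.

Lemma sval_exists (y : H) : P y -> exists x : subspace_hilbert, sval x = y.
Proof. intro Hy. now exists (exist _ y Hy). Qed.

End ClosedSubspace.

Arguments sval {H P HP HPcl} x.
Arguments sval_inj {H P HP HPcl} x y.
Arguments sval_in {H P HP HPcl} x.
Arguments sval_hzero {H P HP HPcl}.
Arguments sval_hadd {H P HP HPcl} x y.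
Arguments sval_hscal {H P HP HPcl} a x.
Arguments inner_sval {H P HP HPcl} x y.
Arguments sval_exists {H P HP HPcl} y.

Definition sqrt2 : Cplx := RC (sqrt 2).

Lemma inner_sqrt2 {H : HilbertSpace} (u v : H) :
  inner (hscal sqrt2 u) (hscal sqrt2 v) = Cmul (RC 2) (inner u v).
Proof.
  hexpand. unfold sqrt2, RC. pose proof (sqrt_sqrt 2 ltac:(lra)) as E.
  set (s := sqrt 2) in *. clearbody s. apply Cplx_ext; cunfold; rewrite <- E; ring.
Qed.

Lemma hscal_sqrt2K {H : HilbertSpace} (u : H) : hscal sqrt2 (hscal (RC (/ sqrt 2)) u) = u.
Proof.
  rewrite hscal_assoc. rewrite <- (hscal_1 u) at 2. f_equal. unfold sqrt2, RC.
  pose proof (sqrt_lt_R0 2 ltac:(lra)). apply Cplx_ext; simpl; [field; lra | ring].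
Qed.

Lemma hscal_inv_sqrt2K {H : HilbertSpace} (u : H) : hscal (RC (/ sqrt 2)) (hscal sqrt2 u) = u.
Proof.
  rewrite hscal_assoc. rewrite <- (hscal_1 u) at 2. f_equal. unfold sqrt2, RC.
  pose proof (sqrt_lt_R0 2 ltac:(lra)). apply Cplx_ext; simpl; [field; lra | ring].
Qed.

Lemma Cplus_Ci : Cplus Ci.
Proof. unfold Cplus, Ci; simpl; lra. Qed.

Section DomainA.
Context {H : HilbertSpace} (D : H -> Prop) (T : H -> H).
Hypothesis HL : lin_operator D T.

Lemma defect_domA (l : Cplx) (h : H) : defect D T l h -> domA D T l h.
Proof.
  intro Nh. exists hzero, h. repeat split; auto; [apply (subspace_0 D (proj1 HL)) | hring].
Qed.

Lemma domA_incl (l m : Cplx) (x : H) :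
  (forall h, defect D T l h -> domA D T m h) -> domA D T l x -> domA D T m x.
Proof.
  intros Hincl [g [h [Dg [Nh ->]]]]. destruct (Hincl h Nh) as [g' [h' [Dg' [Nh' ->]]]].
  exists (hadd g g'), h'. repeat split; auto; [apply (subspace_add D (proj1 HL)); auto | hring].
Qed.

Lemma char_fun_const_defect_incl (K : HilbertSpace) (Gm Gp : H -> K) (Theta : Cplx -> K -> K) :
  char_fun D T K Gm Gp Theta ->
  (forall l m, Cplus l -> Cplus m -> forall k, Theta l k = Theta m k) ->
  forall l m, Cplus l -> Cplus m -> forall h, defect D T l h -> domA D T m h.
Proof.
  intros Hchar Hconst l m Hl Hm h Nh.
  destruct (proj1 (proj2 (Hchar l Hl) h) (defect_domA l h Nh)) as [Hh E].
  apply (proj2 (Hchar m Hm)). split; auto. now rewrite <- (Hconst l m Hl Hm).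
Qed.

End DomainA.

Notation defect_space D T :=
  (subspace_hilbert (defect D T Ci) (defect_subspace D T Ci) (defect_closed D T Ci)).

Section BoundaryTriplet.
Context {H : HilbertSpace} (D : H -> Prop) (T : H -> H).
Hypotheses (HL : lin_operator D T) (HS : symmetric_op D T)
  (Hdense : densely_defined D) (Hcl : closed_op D T).
Context {I : Type} (e f : I -> H).
Hypotheses (He : onb (defect D T Ci) e) (Hf : onb (defect D T (Copp Ci)) f).

Definition pick_defect (P : H -> Prop) : defect_space D T :=
  epsilon (inhabits hzero) (fun k : defect_space D T => P (sval k)).

Lemma sval_pick_defect (P : H -> Prop) (y : H) : defect D T Ci y -> P y ->
  (forall y', P y' -> y' = y) -> sval (pick_defect P) = y.
Proof.
  intros Hy Py Huniq. apply Huniq. unfold pick_defect. apply epsilon_spec.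
  destruct (sval_exists y Hy : exists k : defect_space D T, sval k = y) as [k Hk].
  exists k. now rewrite Hk.
Qed.

Let Hfe := onb_orthonormal _ _ Hf.
Let Hef := onb_orthonormal _ _ He.

Lemma span_map_defect (c : H) : defect D T (Copp Ci) c ->
  exists v, span_map f e c v /\ defect D T Ci v.
Proof.
  intro Hc. destruct (span_map_total f e Hfe Hef c) as [v Hv].
  { intros eps Heps. apply (proj2 (proj2 (proj2 Hf))); auto. }
  exists v. split; auto. apply defect_closed. intros eps Heps.
  destruct (Hv eps Heps) as [l [_ Hl]]. exists (lincomb e l). split; auto.
  apply (subspace_lincomb _ (defect_subspace D T Ci)), He.
Qed.

Lemma span_map_onto_defect (v : H) : defect D T Ci v ->
  exists c, span_map f e c v /\ defect D T (Copp Ci) c.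
Proof.
  intro Hv. destruct (span_map_total e f Hef Hfe v) as [c Hc].
  { intros eps Heps. apply (proj2 (proj2 (proj2 He))); auto. }
  exists c. split; [now apply span_map_swap|]. apply defect_closed. intros eps Heps.
  destruct (Hc eps Heps) as [l [_ Hl]]. exists (lincomb f l). split; auto.
  apply (subspace_lincomb _ (defect_subspace D T (Copp Ci))), Hf.
Qed.

(* For x = a + b + c, Gamma_plus x = sqrt 2 b and Gamma_minus x = sqrt 2 V c, where V is the
   unitary N_{-i} -> N_i sending the basis f to the basis e. *)
Definition Gamma_plus (x : H) : defect_space D T :=
  pick_defect (fun y => exists a b c, vN_decomp D T x a b c /\ y = hscal sqrt2 b).

Definition Gamma_minus (x : H) : defect_space D T :=
  pick_defect (fun y => exists a b c v,
    vN_decomp D T x a b c /\ span_map f e c v /\ y = hscal sqrt2 v).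

Lemma Gamma_plus_spec (x a b c : H) : vN_decomp D T x a b c ->
  sval (Gamma_plus x) = hscal sqrt2 b.
Proof.
  intro Hd. apply sval_pick_defect.
  - apply (subspace_scal _ (defect_subspace D T Ci)), Hd.
  - now exists a, b, c.
  - intros y [a' [b' [c' [Hd' ->]]]].
    now destruct (vN_decomp_unique D T HL HS Hdense _ _ _ _ _ _ _ Hd Hd') as [_ [-> _]].
Qed.

Lemma Gamma_minus_spec (x a b c v : H) : vN_decomp D T x a b c -> span_map f e c v ->
  sval (Gamma_minus x) = hscal sqrt2 v.
Proof.
  intros Hd Hv. destruct (span_map_defect c (proj1 (proj2 (proj2 Hd)))) as [v' [Hv' Nv']].
  rewrite (span_map_functional f e Hfe Hef c v v') by assumption.
  apply sval_pick_defect.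
  - apply (subspace_scal _ (defect_subspace D T Ci)), Nv'.
  - now exists a, b, c, v'.
  - intros y [a' [b' [c' [w [Hd' [Hw ->]]]]]].
    destruct (vN_decomp_unique D T HL HS Hdense _ _ _ _ _ _ _ Hd Hd') as [_ [_ <-]].
    now rewrite (span_map_functional f e Hfe Hef c w v').
Qed.

Lemma adj_dom_vN_decomp (x : H) : adj_dom D T x ->
  exists a b c v, vN_decomp D T x a b c /\ span_map f e c v.
Proof.
  intros [x' Hx]. destruct (vN_decomp_exists D T HL HS Hcl x x' Hx) as [a [b [c Hd]]].
  destruct (span_map_defect c (proj1 (proj2 (proj2 Hd)))) as [v [Hv _]].
  now exists a, b, c, v.
Qed.

Lemma Gamma_plus_lin : lin_on (adj_dom D T) Gamma_plus.
Proof.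
  intros s t x y Hx Hy.
  destruct (adj_dom_vN_decomp x Hx) as [ax [bx [cx [vx [Dx _]]]]].
  destruct (adj_dom_vN_decomp y Hy) as [ay [bY [cy [vy [Dy _]]]]].
  apply sval_inj. rewrite sval_hadd, !sval_hscal.
  rewrite (Gamma_plus_spec _ _ _ _ (vN_decomp_lin D T HL s t _ _ _ _ _ _ _ _ Dx Dy)).
  rewrite (Gamma_plus_spec _ _ _ _ Dx), (Gamma_plus_spec _ _ _ _ Dy). hring.
Qed.

Lemma Gamma_minus_lin : lin_on (adj_dom D T) Gamma_minus.
Proof.
  intros s t x y Hx Hy.
  destruct (adj_dom_vN_decomp x Hx) as [ax [bx [cx [vx [Dx Rx]]]]].
  destruct (adj_dom_vN_decomp y Hy) as [ay [bY [cy [vy [Dy Ry]]]]].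
  apply sval_inj. rewrite sval_hadd, !sval_hscal.
  rewrite (Gamma_minus_spec _ _ _ _ _ (vN_decomp_lin D T HL s t _ _ _ _ _ _ _ _ Dx Dy)
             (span_map_lin f e s t _ _ _ _ Rx Ry)).
  rewrite (Gamma_minus_spec _ _ _ _ _ Dx Rx), (Gamma_minus_spec _ _ _ _ _ Dy Ry). hring.
Qed.

(* For x = a + b + c, S^* x = S a + i b - i c; symmetry of S and the defect equations
   leave only 2i (b, b') - 2i (c, c'), and V preserves (c, c'). *)
Lemma Gamma_Green (x x' y y' : H) : adj D T x x' -> adj D T y y' ->
  Csub (inner x' y) (inner x y') =
  Cmul Ci (Csub (inner (Gamma_plus x) (Gamma_plus y)) (inner (Gamma_minus x) (Gamma_minus y))).
Proof.
  intros Hx Hy.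
  destruct (adj_dom_vN_decomp x (ex_intro _ x' Hx)) as [a [b [c [v [Dx Rx]]]]].
  destruct (adj_dom_vN_decomp y (ex_intro _ y' Hy)) as [a' [b' [c' [v' [Dy Ry]]]]].
  rewrite !inner_sval, (Gamma_plus_spec _ _ _ _ Dx), (Gamma_plus_spec _ _ _ _ Dy),
    (Gamma_minus_spec _ _ _ _ _ Dx Rx), (Gamma_minus_spec _ _ _ _ _ Dy Ry), !inner_sqrt2,
    <- (span_map_inner f e Hfe Hef c v c' v' Rx Ry).
  rewrite (adj_unique D T _ _ _ Hdense Hx (vN_decomp_adj D T HS _ _ _ _ Dx)).
  rewrite (adj_unique D T _ _ _ Hdense Hy (vN_decomp_adj D T HS _ _ _ _ Dy)).
  destruct Dx as [Da [Db [Dc ->]]], Dy as [Da' [Db' [Dc' ->]]].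
  hexpand. rewrite (HS a a' Da Da'), (Db' a Da), (Dc' a Da),
    (inner_conj (T a') b), (inner_conj (T a') c), (Db a' Da'), (Dc a' Da').
  hexpand. rewrite (inner_conj b a'), (inner_conj c a'). unfold RC. cring.
Qed.

Lemma Gamma_surj (k1 k2 : defect_space D T) :
  exists x, adj_dom D T x /\ Gamma_minus x = k1 /\ Gamma_plus x = k2.
Proof.
  destruct (span_map_onto_defect (sval k1) (sval_in k1)) as [c1 [R1 Nc1]].
  set (b := hscal (RC (/ sqrt 2)) (sval k2)). set (c := hscal (RC (/ sqrt 2)) c1).
  assert (Hd : vN_decomp D T (hadd b c) hzero b c).
  { split; [apply (subspace_0 _ (proj1 HL))|split; [|split]].
    - apply (subspace_scal _ (defect_subspace D T Ci)), sval_in.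
    - apply (subspace_scal _ (defect_subspace D T (Copp Ci))), Nc1.
    - hring. }
  assert (Rc : span_map f e c (hscal (RC (/ sqrt 2)) (sval k1))).
  { pose proof (span_map_lin f e (RC (/ sqrt 2)) C0 _ _ _ _ R1 R1) as Rc.
    now rewrite !hscal_0, !hadd_0 in Rc. }
  exists (hadd b c). split; [|split].
  - eexists. apply (vN_decomp_adj D T HS _ _ _ _ Hd).
  - apply sval_inj. rewrite (Gamma_minus_spec _ _ _ _ _ Hd Rc). apply hscal_sqrt2K.
  - apply sval_inj. rewrite (Gamma_plus_spec _ _ _ _ Hd). apply hscal_sqrt2K.
Qed.

Lemma boundary_triplet_Gamma :
  boundary_triplet D T (defect_space D T) Gamma_minus Gamma_plus.
Proof.
  split; [exact Gamma_minus_lin | split; [exact Gamma_plus_lin | split]].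
  - exact Gamma_Green.
  - exact Gamma_surj.
Qed.

Lemma domA_Ci_iff (x : H) :
  domA D T Ci x <-> adj_dom D T x /\ hzero = Gamma_minus x.
Proof.
  split.
  - intros [g [h [Dg [Nh ->]]]].
    assert (Hd : vN_decomp D T (hadd g h) g h hzero).
    { split; [|split; [|split]]; auto.
      - apply (subspace_0 _ (defect_subspace D T (Copp Ci))).
      - now rewrite hadd_0. }
    split; [eexists; apply (vN_decomp_adj D T HS _ _ _ _ Hd)|].
    apply sval_inj. rewrite (Gamma_minus_spec _ _ _ _ _ Hd (span_map_0 f e)), sval_hzero. hring.
  - intros [Hx E]. destruct (adj_dom_vN_decomp x Hx) as [a [b [c [v [Dx Rx]]]]].
    apply (f_equal sval) in E. symmetry in E. rewrite (Gamma_minus_spec _ _ _ _ _ Dx Rx) in E.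
    assert (Hv : v = hzero).
    { rewrite <- (hscal_inv_sqrt2K v), E, sval_hzero. hring. }
    assert (Hc : c = hzero).
    { apply hnorm_eq0. rewrite (span_map_hnorm f e Hfe Hef c v Rx), Hv. apply hnorm_0. }
    destruct Dx as [Da [Db [_ ->]]]. exists a, b. repeat split; auto. rewrite Hc. hring.
Qed.

Lemma char_fun_Gamma :
  (forall l m, Cplus l -> Cplus m -> forall h, defect D T l h -> domA D T m h) ->
  char_fun D T (defect_space D T) Gamma_minus Gamma_plus (fun _ _ => hzero).
Proof.
  intros Hincl l Hl. split.
  - split.
    + intros s t x y _ _. apply sval_inj. rewrite sval_hadd, !sval_hscal, !sval_hzero. hring.
    + exists 0. intro x. rewrite hnorm_0. pose proof (hnorm_ge0 x). lra.
  - intro x. cbv beta. rewrite <- domA_Ci_iff. split; [apply domA_incl | apply domA_incl]; auto.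
    + intros h Nh. apply (Hincl l Ci Hl Cplus_Ci h Nh).
    + intros h Nh. apply (Hincl Ci l Cplus_Ci Hl h Nh).
Qed.

End BoundaryTriplet.

Theorem theorem3p1 (H : HilbertSpace) (D : H -> Prop) (T : H -> H) :
  separable H ->
  lin_operator D T -> densely_defined D -> closed_op D T -> symmetric_op D T ->
  equal_nonzero_defect D T ->
  (phillips D T <->
   (forall l m, Cplus l -> Cplus m -> forall f, defect D T l f -> domA D T m f)).
Proof.
  intros _ HL Hdense Hcl HS Hdef. split.
  - intros [_ [_ [_ [_ [_ [K [Gm [Gp [Theta [_ [Hchar Hconst]]]]]]]]]]].
    exact (char_fun_const_defect_incl D T HL K Gm Gp Theta Hchar Hconst).
  - intro Hincl. destruct (proj1 Hdef) as [I [e [f [He Hf]]]].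
    do 5 (split; [assumption|]).
    exists (defect_space D T), (Gamma_minus D T e f), (Gamma_plus D T).
    exists (fun _ _ => hzero). split; [|split].
    + apply boundary_triplet_Gamma; auto.
    + apply char_fun_Gamma; auto.
    + reflexivity.
Qed.
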